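(* Let $f$ be a stable update function. For every $0<\varepsilon_0\le 1/256$ there exists $\varepsilon>0$ such that, for every configuration $\mathcal U^{(t)}$ of $n$ opinions in $\mathbb S^{d-1}$ and every configuration $\mathcal U^{(t+1)}$ obtained from it by a single interaction: if $\mathcal U^{(t)}$ is $\varepsilon$-inactive, then $\mathcal U^{(t+1)}$ is $\varepsilon_0$-inactive, and the clusters of $\mathcal U^{(t)}$ (with parameter $\varepsilon$) coincide with the clusters of $\mathcal U^{(t+1)}$ (with parameter $\varepsilon_0$).
   Context: Opinions are unit vectors in $\mathbb R^d$; a configuration is an $n$-tuple, $A_{ij}=\langle\vec u_i,\vec u_j\rangle$. An interaction $(i,j)$, $i\ne j$, replaces $\vec u_i$ by $\vec w/\|\vec w\|$ with $\vec w=\vec u_i+f(A_{ij})\vec u_j$, leaving others unchanged. $f:[-1,1]\to\mathbb R$ is stable if continuous and $\operatorname{sign}f(A)=\operatorname{sign}A$ for all $A$. A configuration is $\varepsilon$-inactive if for all $i,j$, $|A_{ij}|\le\varepsilon$ or $|A_{ij}|\ge1-\varepsilon$. For an $\varepsilon$-inactive configuration, a nonempty $C\subseteq[n]$ is a cluster if $|A_{ij}|\ge1-\varepsilon$ for all $i,j\in C$ and $|A_{ij}|\le\varepsilon$ for all $i\in C$, $j\notin C$; for $\varepsilon\le1/256$ the clusters form a unique partition of $[n]$. *)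

From HB Require Import structures.
From mathcomp Require Import all_boot all_order all_algebra.
From mathcomp Require Import all_classical all_reals all_analysis.
Set Implicit Arguments. Unset Strict Implicit. Unset Printing Implicit Defensive.
Import Order.TTheory GRing.Theory Num.Theory.
Import numFieldNormedType.Exports.
Local Open Scope ring_scope.

Section Opinions.
Variable R : realType.

Definition dotv (d : nat) (u v : 'rV[R]_d) : R := \sum_(k < d) u 0 k * v 0 k.

Definition enorm (d : nat) (u : 'rV[R]_d) : R := Num.sqrt (dotv u u).

Definition config (n d : nat) := 'I_n -> 'rV[R]_d.

Definition on_sphere (n d : nat) (U : config n d) : Prop :=
  forall k, dotv (U k) (U k) = 1.

Definition gram (n d : nat) (U : config n d) (i j : 'I_n) : R := dotv (U i) (U j).

(* f : [-1,1] -> R, modelled as R -> R; only values on [-1,1] matter *)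
Definition stable (f : R -> R) : Prop :=
  {within [set x : R | -1 <= x <= 1], continuous f}%classic /\
  (forall A : R, -1 <= A <= 1 -> Num.sg (f A) = Num.sg A).

(* V is obtained from U by the interaction (i,j), i <> j:
   u_i is replaced by w/||w|| with w = u_i + f(A_ij) u_j (w <> 0 so that
   the update is defined). *)
Definition interaction (f : R -> R) (n d : nat) (U V : config n d)
  (i j : 'I_n) : Prop :=
  let w := U i + f (gram U i j) *: U j in
  i != j /\ w != 0 /\
  (forall k, V k = if k == i then (enorm w)^-1 *: w else U k).

Definition single_interaction (f : R -> R) (n d : nat) (U V : config n d) : Prop :=
  exists i j, interaction f U V i j.

Definition inactive (eps : R) (n d : nat) (U : config n d) : Prop :=
  forall i j, `|gram U i j| <= eps \/ 1 - eps <= `|gram U i j|.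

Definition is_cluster (eps : R) (n d : nat) (U : config n d) (C : {set 'I_n}) : Prop :=
  C != finset.set0 /\
  (forall i j, i \in C -> j \in C -> 1 - eps <= `|gram U i j|) /\
  (forall i j, i \in C -> j \notin C -> `|gram U i j| <= eps).

End Opinions.

From HB Require Import structures.
From mathcomp Require Import all_boot all_order all_algebra.
From mathcomp Require Import all_classical all_reals all_analysis.
From mathcomp Require Import lra ring.
Import Order.TTheory GRing.Theory Num.Theory.
Import numFieldNormedType.Exports.
Local Open Scope ring_scope.

(* An interaction (i,j) only changes row and column i of the Gram matrix:
   with x = A_ik, y = A_jk, a = A_ij and c = f(a), the new entry is
   (x + c y) / sqrt(1 + 2 c a + c^2).  If |a| is small, continuity of f and
   f(0) = 0 make c small, so the new entry is a small perturbation of x.  If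
   |a| >= 1 - eps, then c has the sign s of a, and u_i, s u_j are almost
   equal: s y = x + rho with rho^2 <= 2 - 2|a|.  With t = |c| the new entry is
   ((1 + t) x + t rho) / sqrt(1 + 2 t |a| + t^2), whose denominator lies
   between (1 + t)/2 and 1 + t; so x is again only perturbed by O(sqrt eps).
   Hence every small entry stays small and every large entry stays large, and
   the cluster partition cannot change. *)

Section InnerProduct.
Context {R : realType} {d : nat}.
Implicit Types u v w : 'rV[R]_d.

Lemma dotvC u v : dotv u v = dotv v u.
Proof. by apply: eq_bigr => k _; rewrite mulrC. Qed.

Lemma dotvDl u v w : dotv (u + v) w = dotv u w + dotv v w.
Proof. by rewrite /dotv -big_split; apply: eq_bigr => k _; rewrite mxE mulrDl. Qed.

Lemma dotvZl (a : R) u w : dotv (a *: u) w = a * dotv u w.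
Proof. by rewrite /dotv mulr_sumr; apply: eq_bigr => k _; rewrite mxE mulrA. Qed.

Lemma dotvNl u w : dotv (- u) w = - dotv u w.
Proof. by rewrite -scaleN1r dotvZl mulN1r. Qed.

Lemma dotvNr u w : dotv w (- u) = - dotv w u.
Proof. by rewrite dotvC dotvNl dotvC. Qed.

Lemma dotvDr u v w : dotv w (u + v) = dotv w u + dotv w v.
Proof. by rewrite dotvC dotvDl !(dotvC w). Qed.

Lemma dotvZr (a : R) u w : dotv w (a *: u) = a * dotv w u.
Proof. by rewrite dotvC dotvZl dotvC. Qed.

Lemma dotvv_ge0 u : 0 <= dotv u u.
Proof. by apply: sumr_ge0 => k _; rewrite -expr2 sqr_ge0. Qed.

Lemma dotvv_eq0 u : (dotv u u == 0) = (u == 0).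
Proof.
apply/idP/eqP => [|->]; last by rewrite /dotv big1 // => k _; rewrite mxE mul0r.
rewrite psumr_eq0 => [/allP u0|k _]; last by rewrite -expr2 sqr_ge0.
apply/rowP => k; rewrite mxE.
by have := u0 k (mem_index_enum k); rewrite /= mulf_eq0 orbb => /eqP.
Qed.

Lemma dotv_unit_sqr_le u v : dotv u u = 1 -> dotv v u ^+ 2 <= dotv v v.
Proof.
move=> u1; have := dotvv_ge0 (v + (- dotv v u) *: u).
by rewrite !(dotvDl, dotvDr, dotvZl, dotvZr) u1 (dotvC u v); nra.
Qed.

End InnerProduct.

Section RealBounds.
Context {R : realType}.

Lemma norm_le_sqr (p q : R) : 0 <= q -> (`|p| <= q) = (p ^+ 2 <= q ^+ 2).
Proof. by move=> q0; rewrite -real_normK ?num_real // ler_sqr ?nnegrE. Qed.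

Lemma sqr_le_norm (p q : R) : 0 <= q -> (q <= `|p|) = (q ^+ 2 <= p ^+ 2).
Proof. by move=> q0; rewrite -[p ^+ 2]real_normK ?num_real // ler_sqr ?nnegrE. Qed.

Definition gap_preserved (eps eps0 x y : R) : Prop :=
  (`|x| <= eps -> `|y| <= eps0) /\ (1 - eps <= `|x| -> 1 - eps0 <= `|y|).

Lemma gap_preserved_id (eps eps0 x : R) : eps <= eps0 -> gap_preserved eps eps0 x x.
Proof. by move=> eps_le; split; lra. Qed.

Lemma gap_preserved_sqr_ratio (eps eps0 x y num D : R) :
  0 < D -> 0 <= eps0 <= 1 -> y ^+ 2 = num ^+ 2 / D ->
  (`|x| <= eps -> num ^+ 2 <= eps0 ^+ 2 * D) /\
  (1 - eps <= `|x| -> (1 - eps0) ^+ 2 * D <= num ^+ 2) ->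
  gap_preserved eps eps0 x y.
Proof.
move=> D0 /andP[e0 e1] yE [small large]; split=> [/small | /large] h.
- by rewrite norm_le_sqr // yE ler_pdivrMr.
- by rewrite sqr_le_norm ?subr_ge0 // yE ler_pdivlMr.
Qed.

Lemma small_coupling_bounds {eps eps0 c a x y : R} :
  0 < eps0 -> eps0 <= 1 / 256 -> eps <= eps0 / 4 -> `|c| <= eps0 / 4 ->
  `|a| <= 1 -> `|x| <= 1 -> `|y| <= 1 ->
  (`|x| <= eps -> (x + c * y) ^+ 2 <= eps0 ^+ 2 * (1 + 2 * c * a + c ^+ 2)) /\
  (1 - eps <= `|x| -> (1 - eps0) ^+ 2 * (1 + 2 * c * a + c ^+ 2) <= (x + c * y) ^+ 2).
Proof.
move=> eps0_gt0 eps0_small eps_le c_small a1 x1 y1.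
have c0 := normr_ge0 c.
have cy : `|c * y| <= `|c| by rewrite normrM; apply: ler_piMr.
have /andP[ca_lo ca_hi] : - `|c| <= c * a <= `|c|.
  by rewrite -ler_norml normrM; apply: ler_piMr.
have cc : c ^+ 2 = `|c| ^+ 2 by rewrite real_normK ?num_real.
have D_lo : 1 - 2 * `|c| <= 1 + 2 * c * a + c ^+ 2 by rewrite -mulrA; nra.
have D_hi : 1 + 2 * c * a + c ^+ 2 <= (1 + eps0 / 4) ^+ 2 by rewrite cc -mulrA; nra.
split=> hx.
- have : (x + c * y) ^+ 2 <= (eps0 / 2) ^+ 2.
    rewrite -norm_le_sqr; last lra.
    by apply: le_trans (ler_normD _ _) _; lra.
  have : eps0 ^+ 2 * (1 / 4) <= eps0 ^+ 2 * (1 + 2 * c * a + c ^+ 2).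
    by apply: ler_wpM2l; rewrite ?sqr_ge0 //; lra.
  by rewrite expr_div_n; lra.
- have : (1 - eps0 / 2) ^+ 2 <= (x + c * y) ^+ 2.
    rewrite -sqr_le_norm; last lra.
    by have := lerB_normD x (c * y); lra.
  have : (1 - eps0) ^+ 2 * (1 + eps0 / 4) ^+ 2 <= (1 - eps0 / 2) ^+ 2.
    by rewrite -exprMn -norm_le_sqr ?ger0_norm; nra.
  have : (1 - eps0) ^+ 2 * (1 + 2 * c * a + c ^+ 2) <= (1 - eps0) ^+ 2 * (1 + eps0 / 4) ^+ 2.
    by apply: ler_wpM2l; rewrite ?sqr_ge0.
  lra.
Qed.

Lemma aligned_coupling_bounds {eps eps0 t b x rho : R} :
  0 < eps0 -> eps0 <= 1 / 256 -> eps <= eps0 ^+ 2 / 64 ->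
  0 <= t -> 1 - eps <= b <= 1 -> rho ^+ 2 <= 2 - 2 * b ->
  (`|x| <= eps ->
     ((1 + t) * x + t * rho) ^+ 2 <= eps0 ^+ 2 * (1 + 2 * t * b + t ^+ 2)) /\
  (1 - eps <= `|x| ->
     (1 - eps0) ^+ 2 * (1 + 2 * t * b + t ^+ 2) <= ((1 + t) * x + t * rho) ^+ 2).
Proof.
move=> eps0_gt0 eps0_small eps_le t0 /andP[b_lo b_hi] rho_sqr.
have eps_le4 : eps <= eps0 / 4 by nra.
have rho_small : `|rho| <= eps0 / 4 by rewrite norm_le_sqr; nra.
have rho0 := normr_ge0 rho.
have trho : `|t * rho| <= t * (eps0 / 4) by rewrite normrM ger0_norm // ler_wpM2l.
have tx : `|(1 + t) * x| = (1 + t) * `|x| by rewrite normrM ger0_norm //; lra.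
split=> hx.
- have num_small : `|(1 + t) * x + t * rho| <= (1 + t) * (eps0 / 2).
    apply: le_trans (ler_normD _ _) _; rewrite tx.
    have : (1 + t) * `|x| <= (1 + t) * eps by apply: ler_wpM2l; lra.
    nra.
  have : (1 + t) ^+ 2 / 4 <= 1 + 2 * t * b + t ^+ 2.
    have : t * (1 - eps) <= t * b by apply: ler_wpM2l.
    nra.
  have : ((1 + t) * x + t * rho) ^+ 2 <= ((1 + t) * (eps0 / 2)) ^+ 2.
    by rewrite -norm_le_sqr //; apply: mulr_ge0; lra.
  by rewrite exprMn => h1 h2; have := ler_wpM2l (sqr_ge0 eps0) h2; nra.
- have num_large : (1 + t) * (1 - eps0 / 2) <= `|(1 + t) * x + t * rho|.
    apply: le_trans (lerB_normD _ _); rewrite tx.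
    have : (1 + t) * (1 - eps) <= (1 + t) * `|x| by apply: ler_wpM2l; lra.
    nra.
  have : ((1 + t) * (1 - eps0 / 2)) ^+ 2 <= ((1 + t) * x + t * rho) ^+ 2.
    by rewrite -sqr_le_norm //; apply: mulr_ge0; lra.
  apply: le_trans; rewrite exprMn mulrC.
  by apply: ler_pM; rewrite ?sqr_ge0 //; nra.
Qed.

End RealBounds.

Lemma stable_f0 {R : realType} {f : R -> R} : stable f -> f 0 = 0.
Proof.
move=> [_ sg_f]; apply/eqP; rewrite -sgr_eq0 sg_f ?sgr0 //.
by rewrite oppr_le0 ler01.
Qed.

Lemma stable_small_near0 {R : realType} {f : R -> R} {e : R} : stable f ->
  0 < e -> exists2 eta : R, 0 < eta &
    forall a, -1 <= a <= 1 -> `|a| < eta -> `|f a| <= e.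
Proof.
move=> f_stable e0; have [f_cont _] := f_stable.
have dom0 : ([set x : R | -1 <= x <= 1])%classic 0 by rewrite /= oppr_le0 ler01.
have /cvgrPdist_le /(_ e e0) := (proj1 (subspace_continuousP _ _) f_cont) 0 dom0.
rewrite stable_f0 // => /nbhs_ballP[eta eta0 near0].
exists eta => // a a_dom a_small.
by have := near0 a; rewrite sub0r normrN; apply; rewrite // /ball /= sub0r normrN.
Qed.

Section Interaction.
Context {R : realType} {f : R -> R} {n d : nat} {U V : config R n d} {i j : 'I_n}.
Hypotheses (U_sphere : on_sphere U) (UV : interaction f U V i j).

Let a := gram U i j.
Let c := f a.
Let w := U i + c *: U j.

Lemma gram_sphere_le1 k l : `|gram U k l| <= 1.
Proof. by rewrite norm_le_sqr // expr1n -(U_sphere k); apply: dotv_unit_sqr_le. Qed.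

Lemma interaction_dotww : dotv w w = 1 + 2 * c * a + c ^+ 2.
Proof.
rewrite /w !(dotvDl, dotvDr, dotvZl, dotvZr) !U_sphere (dotvC (U j) (U i)).
by rewrite -/(gram U i j) -/a; ring.
Qed.

Lemma interaction_dotww_gt0 : 0 < dotv w w.
Proof. by case: UV => _ [w0 _]; rewrite lt_def dotvv_ge0 dotvv_eq0 w0. Qed.

Lemma interaction_row_sqr k : k != i ->
  gram V i k ^+ 2 = (gram U i k + c * gram U j k) ^+ 2 / (1 + 2 * c * a + c ^+ 2).
Proof.
case: UV => _ [_ VE] ki.
rewrite /gram !VE eqxx (negbTE ki) dotvZl dotvDl dotvZl exprMn exprVn.
by rewrite /enorm sqr_sqrtr ?dotvv_ge0 // -/w interaction_dotww mulrC.
Qed.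

Lemma interaction_diag : gram V i i = 1.
Proof.
case: UV => _ [_ VE]; have w0 := interaction_dotww_gt0.
rewrite /gram VE eqxx dotvZl dotvZr mulrA -expr2 exprVn /enorm sqr_sqrtr ?dotvv_ge0 //.
by rewrite mulVf // gt_eqF.
Qed.

Lemma interaction_unchanged k l : k != i -> l != i -> gram V k l = gram U k l.
Proof. by case: UV => _ [_ VE] ki li; rewrite /gram !VE (negbTE ki) (negbTE li). Qed.

(* [s * u_j - u_i] has squared length [2 - 2 s a], and Cauchy-Schwarz against
   the unit vector [u_k] bounds its inner product with [u_k]. *)
Lemma aligned_defect_sqr (s : R) k : s ^+ 2 = 1 ->
  (s * gram U j k - gram U i k) ^+ 2 <= 2 - 2 * s * a.
Proof.
move=> s2; have -> : s * gram U j k - gram U i k = dotv (s *: U j - U i) (U k).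
  by rewrite dotvDl dotvZl dotvNl.
apply: le_trans (dotv_unit_sqr_le _ _ (U_sphere k)) _.
rewrite !(dotvDl, dotvDr, dotvNl, dotvNr, dotvZl, dotvZr) !U_sphere.
by rewrite (dotvC (U j) (U i)) -/(gram U i j) -/a; nra.
Qed.

Lemma interaction_row_gap {eps eps0 eta : R} k :
  0 < eps0 -> eps0 <= 1 / 256 -> eps <= eps0 ^+ 2 / 64 -> eps < eta ->
  (forall b, -1 <= b <= 1 -> `|b| < eta -> `|f b| <= eps0 / 4) ->
  (forall b, -1 <= b <= 1 -> Num.sg (f b) = Num.sg b) ->
  `|a| <= eps \/ 1 - eps <= `|a| -> k != i ->
  gap_preserved eps eps0 (gram U i k) (gram V i k).
Proof.
move=> eps0_gt0 eps0_small eps_small eps_eta f_small f_sg a_gap ki.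
have a_dom : -1 <= a <= 1 by rewrite -ler_norml gram_sphere_le1.
have eps0_1 : 0 <= eps0 <= 1 by apply/andP; split; lra.
apply: (@gap_preserved_sqr_ratio _ _ _ _ _ _ _ _ eps0_1 (interaction_row_sqr k ki)).
  by rewrite -interaction_dotww interaction_dotww_gt0.
case: a_gap => [a_small | a_large].
  have c_small : `|c| <= eps0 / 4 by apply: f_small; lra.
  apply: small_coupling_bounds eps0_gt0 eps0_small _ c_small (gram_sphere_le1 i j)
    (gram_sphere_le1 i k) (gram_sphere_le1 j k).
  by nra.
pose s := Num.sg a; pose t := c * s.
have a0 : a != 0 by apply: contraTneq a_large => ->; rewrite normr0 -ltNge; nra.
have s2 : s ^+ 2 = 1 by rewrite sqr_sg a0.
have t0 : 0 <= t by rewrite /t /s -f_sg // mulrC -normrEsg.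
have sa : s * a = `|a| by rewrite normrEsg.
(* [c = t s], so [x + c y = (1 + t) x + t (s y - x)] and [c a = t |a|]. *)
have cE : c = t * s by rewrite /t -mulrA -expr2 s2 mulr1.
have numE : gram U i k + c * gram U j k =
    (1 + t) * gram U i k + t * (s * gram U j k - gram U i k).
  by rewrite cE; ring.
have DE : 1 + 2 * c * a + c ^+ 2 = 1 + 2 * t * (s * a) + t ^+ 2.
  by rewrite cE exprMn s2 mulr1; ring.
have sa_gap : 1 - eps <= s * a <= 1 by rewrite sa a_large gram_sphere_le1.
have defect : (s * gram U j k - gram U i k) ^+ 2 <= 2 - 2 * (s * a).
  by rewrite mulrA aligned_defect_sqr.
rewrite numE DE.
exact: aligned_coupling_bounds eps0_gt0 eps0_small eps_small t0 sa_gap defect.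
Qed.

End Interaction.

Section Transfer.
Context {R : realType} {n d : nat} {eps eps0 : R} {U V : config R n d}.
Hypothesis UV_gap : forall k l, gap_preserved eps eps0 (gram U k l) (gram V k l).
Hypothesis U_inactive : inactive eps U.

Lemma inactive_gap_preserved : inactive eps0 V.
Proof.
move=> k l; have [small large] := UV_gap k l.
by case: (U_inactive k l) => [/small | /large]; [left | right].
Qed.

Lemma is_cluster_gap_preserved (C : {set 'I_n}) :
  eps0 < 1 / 2 -> is_cluster eps U C <-> is_cluster eps0 V C.
Proof.
move=> eps0_lt; split=> [[C0 [inC outC]] | [C0 [inC outC]]]; do 2 split => //.
- by move=> k l kC lC; apply: (UV_gap k l).2; apply: inC.
- by move=> k l kC lC; apply: (UV_gap k l).1; apply: outC.
- move=> k l kC lC; case: (U_inactive k l) => // /(UV_gap k l).1.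
  by have := inC k l kC lC; lra.
- move=> k l kC lC; case: (U_inactive k l) => // /(UV_gap k l).2.
  by have := outC k l kC lC; lra.
Qed.

End Transfer.

Lemma interaction_gap_preserved {R : realType} {f : R -> R} {n d : nat}
    {U V : config R n d} {i j : 'I_n} {eps eps0 eta : R} :
  stable f -> 0 < eps0 -> eps0 <= 1 / 256 -> eps <= eps0 ^+ 2 / 64 -> eps < eta ->
  (forall b, -1 <= b <= 1 -> `|b| < eta -> `|f b| <= eps0 / 4) ->
  on_sphere U -> interaction f U V i j -> inactive eps U ->
  forall k l, gap_preserved eps eps0 (gram U k l) (gram V k l).
Proof.
move=> [_ f_sg] eps0_gt0 eps0_small eps_small eps_eta f_small U_sphere UV U_inactive.
have row k := interaction_row_gap U_sphere UV k eps0_gt0 eps0_small eps_small eps_eta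
  f_small f_sg (U_inactive i j).
have eps_le : eps <= eps0 by nra.
move=> k l; have [->|ki] := eqVneq k i; have [->|li] := eqVneq l i.
- by rewrite (interaction_diag UV) -(U_sphere i); apply: gap_preserved_id.
- exact: row.
- by rewrite /gram dotvC (dotvC (V k)); apply: row.
- by rewrite !(interaction_unchanged UV) //; apply: gap_preserved_id.
Qed.

Theorem mainTheorem18 (R : realType) (f : R -> R) :
  stable f ->
  forall eps0 : R, 0 < eps0 -> eps0 <= 1 / 256 ->
  exists eps : R, 0 < eps /\
    forall (n d : nat) (U V : config R n d),
      on_sphere U -> single_interaction f U V ->
      inactive eps U ->
      inactive eps0 V /\
      (forall C : {set 'I_n}, is_cluster eps U C <-> is_cluster eps0 V C).
Proof.
move=> f_stable eps0 eps0_gt0 eps0_small.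
have eps0_4 : 0 < eps0 / 4 by lra.
have [eta eta0 f_small] := stable_small_near0 f_stable eps0_4.
pose eps := Num.min (eps0 ^+ 2 / 64) (eta / 2).
have eps_gt0 : 0 < eps by rewrite lt_min; apply/andP; split; nra.
have eps_small : eps <= eps0 ^+ 2 / 64 by rewrite ge_min lexx.
have eps_eta : eps < eta by rewrite gt_min orbC; lra.
exists eps; split => // n d U V U_sphere [i [j UV]] U_inactive.
have UV_gap := interaction_gap_preserved f_stable eps0_gt0 eps0_small eps_small eps_eta
  f_small U_sphere UV U_inactive.
split; first exact: inactive_gap_preserved UV_gap U_inactive.
by move=> C; apply: is_cluster_gap_preserved UV_gap U_inactive C _; lra.
Qed.
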